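(* Each of the following holds; each item asserts the existence of a probability space $(\Omega,\mathcal{F},P)$ and real random variables $X,X_1,X_2,\dots$ on it with the stated properties. (a) There exist such $X,X_n$ with $X_n\xrightarrow{S_3\text{-}d}X$ but not $X_n\xrightarrow{S_2\text{-}d}X$. (b) There exist such $X,X_n$ with $X_n\xrightarrow{S_2\text{-}d}X$ but not $X_n\xrightarrow{S_3\text{-}d}X$. (c) For every $\alpha>0$ there exist such $X,X_n$ with $X_n\xrightarrow{S_\alpha\text{-}a.s.}X$ but not $X_n\xrightarrow{S_3\text{-}d}X$. (d) There exist such $X,X_n$ such that $X_n$ converges completely to $X$ but not $X_n\xrightarrow{S_3\text{-}d}X$.
   Context: Let $X,X_1,X_2,\dots$ be real random variables on a probability space $(\Omega,\mathcal{F},P)$, and let $F_n(x)=P(X_n\le x)$ and $F(x)=P(X\le x)$. - Complete convergence: for every $\varepsilon>0$, $\sum_{n=1}^\infty P(|X_n-X|\ge\varepsilon)<\infty$. - $X_n\xrightarrow{S_\alpha\text{-}a.s.}X$ ($\alpha>0$): $\sum_{n=1}^\infty |X_n-X|^\alpha<\infty$ almost surely. - $X_n\xrightarrow{S_2\text{-}d}X$: for every continuity point $x$ of $F$, $\sum_{n=1}^\infty |F_n(x)-F(x)|<\infty$. - $X_n\xrightarrow{S_3\text{-}d}X$: for every real $t$, $\sum_{n=1}^\infty |E[e^{itX_n}]-E[e^{itX}]|<\infty$. *)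

From HB Require Import structures.
From mathcomp Require Import all_boot all_order all_algebra.
From mathcomp Require Import all_classical all_reals all_analysis.
Set Implicit Arguments. Unset Strict Implicit. Unset Printing Implicit Defensive.
Import Order.TTheory GRing.Theory Num.Theory.
Import numFieldNormedType.Exports.
Local Open Scope classical_set_scope.
Local Open Scope ring_scope.

(* A series of real numbers with nonnegative terms is finite
   iff its partial sums converge. *)
Definition summable (R : realType) (u : nat -> R) : Prop := cvgn (series u).

Definition Fd d (T : measurableType d) (R : realType) (P : probability T R)
  (X : {RV P >-> R}) (x : R) : R := fine (cdf X x).

(* characteristic function phi_X(t) = E[e^{itX}], given by its real part
   E[cos(tX)] and imaginary part E[sin(tX)] *)
Definition chf_re d (T : measurableType d) (R : realType) (P : probability T R)
  (X : {RV P >-> R}) (t : R) : R := fine ('E_P[fun w => cos (t * X w)])%E.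
Definition chf_im d (T : measurableType d) (R : realType) (P : probability T R)
  (X : {RV P >-> R}) (t : R) : R := fine ('E_P[fun w => sin (t * X w)])%E.

Definition chf_dist d (T : measurableType d) (R : realType) (P : probability T R)
  (X Y : {RV P >-> R}) (t : R) : R :=
  Num.sqrt ((chf_re X t - chf_re Y t) ^+ 2 + (chf_im X t - chf_im Y t) ^+ 2).

Definition complete_conv d (T : measurableType d) (R : realType) (P : probability T R)
  (Xn : nat -> {RV P >-> R}) (X : {RV P >-> R}) : Prop :=
  forall eps : R, 0 < eps ->
    summable (fun n => fine (P [set w | eps <= `|Xn n w - X w|])).

Definition S_as d (T : measurableType d) (R : realType) (P : probability T R)
  (alpha : R) (Xn : nat -> {RV P >-> R}) (X : {RV P >-> R}) : Prop :=
  {ae P, forall w, summable (fun n => `|Xn n w - X w| `^ alpha)}.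

Definition S2d d (T : measurableType d) (R : realType) (P : probability T R)
  (Xn : nat -> {RV P >-> R}) (X : {RV P >-> R}) : Prop :=
  forall x : R, {for x, continuous (Fd X)} ->
    summable (fun n => `|Fd (Xn n) x - Fd X x|).

Definition S3d d (T : measurableType d) (R : realType) (P : probability T R)
  (Xn : nat -> {RV P >-> R}) (X : {RV P >-> R}) : Prop :=
  forall t : R, summable (fun n => chf_dist (Xn n) X t).

From Pilot Require Import Defs.
From HB Require Import structures.
From mathcomp Require Import all_boot all_order all_algebra.
From mathcomp Require Import all_classical all_reals all_analysis.
From mathcomp Require Import measurable_realfun ring lra.
Set Implicit Arguments.
Unset Strict Implicit.
Unset Printing Implicit Defensive.
Import Order.TTheory GRing.Theory Num.Theory.
Import numFieldNormedType.Exports.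
(* Re-imported so that [summable] refers to Defs.summable, not esum's. *)
Import Defs.
Local Open Scope classical_set_scope.
Local Open Scope ring_scope.

(* All examples live on [0, 1] with the uniform probability, U = id.
   (a) X = -U^2 has cdf F(y) = 1 - sqrt(-y) on [-1, 0], with infinite slope
   at the continuity point 0; shifting by c_n = 1/(n+1)^2 moves F(0) by
   sqrt c_n = 1/(n+1), a divergent series, whereas the characteristic
   functions move by at most 2|t| c_n, a convergent one.
   (b), (d) The constants -1/(n+1) approach 0 from below, so every cdf value
   and every P(|X_n| >= eps) is eventually exact; but
   Im phi_{X_n}(1) = -sin (1/(n+1)) is not summable.
   (c) The indicators of ]0, 1/(n+1)] vanish eventually at every point, while
   E[sin X_n] = sin 1 / (n+1). *)

Section summability.
Variable R : realType.
Implicit Types u v : nat -> R.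

Lemma summable_eventually0 u : (\forall n \near \oo, u n = 0) -> summable u.
Proof.
case=> N _ uN0; apply: (is_cvg_near_cst (series u N)).
exists N => // n /= Nn; apply/eqP; rewrite -subr_eq0 sub_series_geq//.
by rewrite big_nat big1// => i /andP[Ni _]; exact: uN0.
Qed.

Lemma summable_le u v (c : R) :
  (forall n, 0 <= u n <= c * v n) -> summable v -> summable u.
Proof.
move=> uv sv.
have u0 n : 0 <= u n by have /andP[] := uv n.
have ucv n : u n <= c * v n by have /andP[] := uv n.
apply: (series_le_cvg u0 (fun n => le_trans (u0 n) (ucv n)) ucv).
by have -> : (fun n => c * v n) = c *: v by []; exact: is_cvg_seriesZ.
Qed.

Lemma not_summable_ge_harmonic u (c : R) :
  0 < c -> (forall n, c * harmonic n <= u n) -> ~ summable u.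
Proof.
move=> c0 cu su; apply: (@dvg_harmonic R).
suff : summable (@harmonic R) by [].
apply: (summable_le (c := c^-1)) su => n.
by rewrite harmonic_ge0 ler_pdivlMl ?cu.
Qed.

Lemma summable_harmonic_sqr : summable (fun n => harmonic n ^+ 2 : R).
Proof.
apply: nondecreasing_is_cvgn.
  by apply: nondecreasing_series => n _ _; exact: sqr_ge0.
exists 2 => _ [n _ <-].
suff : series (fun n => harmonic n ^+ 2 : R) n + 2 * harmonic n <= 2.
  by have := @harmonic_ge0 R n; lra.
elim: n => [|n IH].
  by rewrite /series/= big_nil add0r /harmonic/= invr1 mulr1.
rewrite seriesSr -addrA (le_trans _ IH)// lerD2l.
rewrite /harmonic/= -[in n.+2%:R]addn1 natrD.
set a := n.+1%:R; have a1 : 1 <= a by rewrite ler1n.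
rewrite -subr_ge0.
have -> : 2 * a^-1 - (a^-1 ^+ 2 + 2 * (a + 1%:R)^-1) =
          (a - 1) / (a ^+ 2 * (a + 1)).
  by field; apply/andP; split; apply/negP => /eqP; lra.
by apply: divr_ge0; [lra | apply: mulr_ge0; [exact: sqr_ge0 | lra]].
Qed.

Lemma harmonic_le1 n : harmonic n <= 1 :> R.
Proof. by rewrite invf_le1 ?ler1n. Qed.

End summability.

Section trigonometry.
Variable R : realType.

Lemma ler_dist_derive1 (f df : R -> R) :
  (forall x : R, is_derive x (1 : R) f (df x)) -> (forall x, `|df x| <= 1) ->
  forall a b, `|f b - f a| <= `|b - a|.
Proof.
move=> f_df df1.
suff le_ab a b : a <= b -> `|f b - f a| <= `|b - a|.
  move=> a b; have [/le_ab //|/ltW/le_ab] := leP a b.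
  by rewrite distrC (distrC b).
have f_cont : continuous f.
  move=> x; apply/differentiable_continuous/derivable1_diffP.
  exact: ex_derive.
move=> ab; have [c _ ->] :=
  MVT_segment ab (fun x _ => f_df x) (continuous_subspaceT f_cont).
by rewrite normrM ler_piMl.
Qed.

Lemma ler_dist_cos a b : `|cos b - cos a| <= `|b - a| :> R.
Proof.
apply: (@ler_dist_derive1 _ (fun x => - sin x)) => x.
by rewrite normrN sin_max.
Qed.

Lemma ler_dist_sin a b : `|sin b - sin a| <= `|b - a| :> R.
Proof. by apply: (@ler_dist_derive1 _ cos) => x; rewrite ?cos_max. Qed.

Lemma cos1_mul_le_sin x : 0 <= x <= 1 -> cos 1 * x <= sin x :> R.
Proof.
move=> /andP[x0 x1].
have [c] := MVT_segment x0 (fun y _ => is_derive_sin y)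
  (continuous_subspaceT (@continuous_sin R)).
rewrite in_itv/= sin0 !subr0 => /andP[c0 cx] ->.
rewrite ler_wpM2r//; have [->//|c1] := eqVneq c 1.
have pi1 : 1 <= pi :> R by rewrite (le_trans _ (pi_ge2 R))// ler1n.
apply/ltW; rewrite ltr_cos ?in_itv/= ?c0 ?ler01 ?(le_trans (le_trans cx x1))//.
by rewrite lt_neqAle c1 (le_trans cx).
Qed.

End trigonometry.

Lemma sqrtrD_sqr_le (R : rcfType) (a b : R) :
  Num.sqrt (a ^+ 2 + b ^+ 2) <= `|a| + `|b|.
Proof.
rewrite -[leRHS]ger0_norm ?addr_ge0// -[leRHS]sqrtr_sqr; apply: ler_wsqrtr.
rewrite -[a ^+ 2]real_normK ?num_real// -[b ^+ 2]real_normK ?num_real//.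
by rewrite sqrrD addrAC lerDl.
Qed.

Section characteristic_function.
Context d (T : measurableType d) (R : realType) (P : probability T R).

Lemma bounded_Lfun1 (f : T -> R) (M : R) :
  measurable_fun setT f -> (forall w, `|f w| <= M) -> f \in Lfun P 1.
Proof.
move=> mf fM; apply/Lfun1_integrable/measurable_bounded_integrable => //.
  exact: le_lt_trans (probability_le1 P measurableT) (ltry 1).
exists M; split=> [|x Mx y _]; first exact: num_real.
exact: le_trans (fM y) (ltW Mx).
Qed.

Lemma abs_fine_expectation_le (h : T -> R) (K : R) :
  measurable_fun setT h -> (forall w, `|h w| <= K) -> `|fine 'E_P[h]| <= K.
Proof.
move=> mh hK; have Efin := expectation_fin_num (bounded_Lfun1 mh hK).
rewrite -fine_abse// -lee_fin fineK ?abse_fin_num// unlock.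
apply: le_trans (le_abse_integral _ _ _) _ => //; first exact/measurable_EFinP.
rewrite -[leRHS]mule1 -(probability_setT P); apply: integral_le_bound => //.
- exact/measurable_EFinP.
- by rewrite lee_fin (le_trans _ (hK point)).
- by apply: aeW => w _; rewrite lee_fin.
Qed.

Lemma ler_dist_expectation (f g : T -> R) (M K : R) :
  measurable_fun setT f -> measurable_fun setT g ->
  (forall w, `|f w| <= M) -> (forall w, `|g w| <= M) ->
  (forall w, `|f w - g w| <= K) -> `|fine 'E_P[f] - fine 'E_P[g]| <= K.
Proof.
move=> mf mg fM gM fgK.
have [Lf Lg] := (bounded_Lfun1 mf fM, bounded_Lfun1 mg gM).
rewrite -fineB ?expectation_fin_num// -expectationB//.
by apply: abs_fine_expectation_le => //; exact: measurable_funB.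
Qed.

Lemma ler_dist_expectation_lip1 (h : R -> R) (X Y : {RV P >-> R}) t (K : R) :
  continuous h -> (forall x, `|h x| <= 1) ->
  (forall a b, `|h b - h a| <= `|b - a|) -> (forall w, `|X w - Y w| <= K) ->
  `|fine 'E_P[fun w => h (t * X w)] - fine 'E_P[fun w => h (t * Y w)]|
    <= `|t| * K.
Proof.
move=> hc h1 h_lip XYK.
have mh (Z : {RV P >-> R}) : measurable_fun setT (fun w => h (t * Z w)).
  apply: (measurableT_comp (continuous_measurable_fun hc)).
  exact: measurable_funM.
apply: (ler_dist_expectation (M := 1)) => // w.
by rewrite (le_trans (h_lip _ _))// -mulrBr normrM ler_wpM2l.
Qed.

Lemma chf_dist_le (X Y : {RV P >-> R}) t (K : R) :
  (forall w, `|X w - Y w| <= K) -> chf_dist X Y t <= (`|t| * K) *+ 2.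
Proof.
move=> XYK; rewrite /chf_dist (le_trans (sqrtrD_sqr_le _ _))// mulr2n.
apply: lerD; apply: ler_dist_expectation_lip1 => //.
- exact: continuous_cos.
- exact: cos_max.
- exact: ler_dist_cos.
- exact: continuous_sin.
- exact: sin_max.
- exact: ler_dist_sin.
Qed.

Lemma chf_im_dist_le (X Y : {RV P >-> R}) t :
  `|chf_im X t - chf_im Y t| <= chf_dist X Y t.
Proof.
by rewrite /chf_dist -sqrtr_sqr; apply: ler_wsqrtr; rewrite lerDr sqr_ge0.
Qed.

Lemma chf_im_cst (c t : R) : chf_im (cst c : {RV P >-> R}) t = sin (t * c).
Proof.
by rewrite /chf_im -[fun w => _]/(cst (sin (t * c))) expectation_cst.
Qed.

Lemma Fd_cst (c x : R) :
  Fd (cst c : {RV P >-> R}) x = if c <= x then 1 else 0.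
Proof.
rewrite /Fd /cdf /distribution /pushforward; case: ifPn => cx.
  rewrite [X in P X](_ : _ = setT) ?probability_setT//.
  by apply/seteqP; split => w //= _; rewrite in_itv/= cx.
rewrite [X in P X](_ : _ = set0) ?measure0//.
by apply/seteqP; split => w //=; rewrite in_itv/= (negbTE cx).
Qed.

End characteristic_function.

Section negative_harmonic_constants.
Context d (T : measurableType d) (R : realType) (P : probability T R).

Let Xn n : {RV P >-> R} := cst (- harmonic n).

Lemma S2d_neg_harmonic : S2d Xn (cst 0).
Proof.
move=> x _; apply: summable_eventually0; have [x_ge0|x_lt0] := leP 0 x.
  near=> n; rewrite !Fd_cst x_ge0 (le_trans _ x_ge0) ?subrr ?normr0//.
  by rewrite oppr_le0 harmonic_ge0.
near=> n; rewrite !Fd_cst (lt_geF x_lt0) ifF ?subrr ?normr0//.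
apply/negbTE; rewrite -ltNge ltrNr; near: n.
by apply: (cvgr_lt 0 (@cvg_harmonic R)); rewrite oppr_gt0.
Unshelve. all: by end_near.
Qed.

Lemma complete_conv_neg_harmonic : complete_conv Xn (cst 0).
Proof.
move=> e e0; apply: summable_eventually0; near=> n.
rewrite [X in P X](_ : _ = set0) ?measure0//; apply/seteqP; split=> w //=.
rewrite subr0 normrN ger0_norm ?harmonic_ge0// leNgt; apply/negP/negPn.
by near: n; exact: cvgr_lt 0 (@cvg_harmonic R) _ e0.
Unshelve. all: by end_near.
Qed.

Lemma not_S3d_neg_harmonic : ~ S3d Xn (cst 0).
Proof.
move=> /(_ 1); apply: (not_summable_ge_harmonic (@cos1_gt0 R)) => n.
have h01 : 0 <= (harmonic n : R) <= 1 by rewrite harmonic_ge0 harmonic_le1.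
have cos1_h := cos1_mul_le_sin h01.
apply: le_trans (chf_im_dist_le _ _ _).
rewrite !chf_im_cst !mul1r sin0 subr0 sinN normrN ger0_norm//.
by rewrite (le_trans _ cos1_h)// mulr_ge0 ?harmonic_ge0 ?ltW ?cos1_gt0.
Qed.

End negative_harmonic_constants.

Section unit_interval.
Variable R : realType.

Definition unif01 : probability (measurableTypeR R) R :=
  uniform_prob (@ltr01 R).

Lemma unif01E (A : set R) :
  measurable A -> unif01 A = lebesgue_measure (A `&` `[0, 1]).
Proof.
move=> mA; rewrite /unif01 /= /uniform_prob integral_uniform_pdf.
rewrite (eq_integral (fun=> 1%:E)) ?integral_cst ?mul1e//.
  exact: measurableI.
move=> x; rewrite inE/= => -[_]; rewrite in_itv/= /uniform_pdf => ->.
by rewrite subr0 invr1.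
Qed.

Lemma unif01_itv_oc (r : R) : 0 <= r <= 1 -> unif01 `]0, r]%classic = r%:E.
Proof.
move=> /andP[r0 r1]; rewrite unif01E// setIidl; last first.
  by move=> x /=; rewrite !in_itv/= => /andP[/ltW -> /le_trans ->].
rewrite lebesgue_measure_itv/= lte_fin.
case: ltP => [_|r_le0]; first by rewrite oppr0 adde0.
by rewrite [r](@le_anti _ _ r 0) ?r_le0.
Qed.

Lemma unif01_itv_cc (r : R) :
  0 <= r <= 1 -> unif01 `[r, 1]%classic = (1 - r)%:E.
Proof.
move=> /andP[r0 r1]; rewrite unif01E// setIidl; last first.
  by move=> x /=; rewrite !in_itv/= => /andP[/(le_trans r0) -> ->].
rewrite lebesgue_measure_itv/= lte_fin.
case: ltP => [_|r_ge1]; first by rewrite EFinB.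
by rewrite [r](@le_anti _ _ r 1) ?r1 ?r_ge1// subrr.
Qed.

Definition shifted_neg_sqr (c : R) (w : measurableTypeR R) : R := c - w ^+ 2.

Lemma measurable_shifted_neg_sqr c : measurable_fun setT (shifted_neg_sqr c).
Proof. by apply: measurable_funB => //; exact: measurable_funX. Qed.

HB.instance Definition _ c := isMeasurableFun.Build _ _ (measurableTypeR R) R
  (shifted_neg_sqr c) (measurable_shifted_neg_sqr c).

(* For c < y the square root is 0 and both sides are 1. *)
Lemma Fd_shifted_neg_sqr (c y : R) : c - y <= 1 ->
  Fd (shifted_neg_sqr c : {RV unif01 >-> R}) y = 1 - Num.sqrt (c - y).
Proof.
move=> cy1; set s := Num.sqrt (c - y).
have s01 : 0 <= s <= 1 by rewrite sqrtr_ge0 -sqrtr1 ler_wsqrtr.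
have mS : measurable (shifted_neg_sqr c @^-1` `]-oo, y]).
  by rewrite -[X in measurable X]setTI; exact: measurable_shifted_neg_sqr.
rewrite /Fd /cdf /distribution /pushforward -[RHS]/(fine (1 - s)%:E).
rewrite -unif01_itv_cc// !unif01E//; congr (fine (lebesgue_measure _)).
have sw w : 0 <= w -> (s <= w) = (c - w ^+ 2 <= y).
  move=> w0; rewrite -[w in s <= w](ger0_norm w0) -sqrtr_sqr.
  by rewrite ler_sqrt ?sqr_ge0//; apply/idP/idP => ?; lra.
apply/seteqP; split=> w /= [Sw w01]; split=> //;
  move: w01 Sw; rewrite !in_itv/= /shifted_neg_sqr => /andP[w0 w1];
  by rewrite w1 andbT sw.
Qed.

Lemma Fd_neg_sqr_continuous0 :
  {for 0, continuous (Fd (shifted_neg_sqr 0 : {RV unif01 >-> R}))}.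
Proof.
have cont : {for 0, continuous (fun y : R => 1 - Num.sqrt (0 - y))}.
  apply: continuousB; first exact: cst_continuous.
  apply: continuous_comp; last exact: sqrt_continuous.
  by apply: continuousB; [exact: cst_continuous | exact: cvg_id].
have FdE : \forall y \near 0, 1 - Num.sqrt (0 - y) =
    Fd (shifted_neg_sqr 0 : {RV unif01 >-> R}) y.
  near=> y; rewrite Fd_shifted_neg_sqr//; near: y.
  exists 1 => //= z /ltW; apply: le_trans; exact: ler_norm.
rewrite /prop_for /continuous_at.
rewrite Fd_shifted_neg_sqr; last by rewrite subrr ler01.
exact: cvg_trans (near_eq_cvg FdE) cont.
Unshelve. all: by end_near.
Qed.

Let Xn n : {RV unif01 >-> R} := shifted_neg_sqr (harmonic n ^+ 2).

Lemma S3d_shifted_neg_sqr : S3d Xn (shifted_neg_sqr 0).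
Proof.
move=> t; apply: (summable_le (c := `|t| *+ 2)) (@summable_harmonic_sqr R) => n.
rewrite mulrnAl chf_dist_le ?andbT ?sqrtr_ge0// => w.
by rewrite /= /shifted_neg_sqr sub0r opprK subrK ger0_norm ?sqr_ge0.
Qed.

Lemma not_S2d_shifted_neg_sqr : ~ S2d Xn (shifted_neg_sqr 0).
Proof.
move=> /(_ 0 Fd_neg_sqr_continuous0).
apply: (not_summable_ge_harmonic ltr01) => n.
have h2_le1 : harmonic n ^+ 2 - 0 <= 1 :> R.
  by rewrite subr0 exprn_ile1 ?harmonic_ge0 ?harmonic_le1.
rewrite !Fd_shifted_neg_sqr ?subrr ?ler01// subr0 sqrtr_sqr sqrtr0 subr0.
by rewrite addrAC subrr add0r normrN !ger0_norm ?harmonic_ge0 ?mul1r.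
Qed.

Definition shrinking_indic n : {RV unif01 >-> R} :=
  @indic_mfun _ (measurableTypeR R) R _ (measurable_itv `]0, harmonic n]).

Lemma shrinking_indicE n (w : R) :
  shrinking_indic n w = if 0 < w <= harmonic n then 1 else 0.
Proof.
rewrite /= mindicE; case: ifPn => w_in; first by rewrite mem_set.
by rewrite memNset// /= in_itv/=; exact/negP.
Qed.

Lemma S_as_shrinking_indic alpha :
  0 < alpha -> S_as alpha shrinking_indic (cst 0).
Proof.
move=> alpha_gt0; apply: aeW => w /=; apply: summable_eventually0.
suff : \forall n \near \oo, ~~ (0 < (w : R) <= harmonic n).
  apply: filterS => n /negbTE w_out.
  by rewrite shrinking_indicE w_out subrr normr0 powR0 ?gt_eqF.
have [w_gt0|_] := ltP 0 w; last by near=> n.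
near=> n; rewrite /= -ltNge; near: n.
exact: cvgr_lt 0 (@cvg_harmonic R) _ w_gt0.
Unshelve. all: by end_near.
Qed.

Lemma chf_im_shrinking_indic n :
  chf_im (shrinking_indic n) 1 = sin 1 * harmonic n.
Proof.
have h01 : 0 <= (harmonic n : R) <= 1 by rewrite harmonic_ge0 harmonic_le1.
rewrite /chf_im (_ : (fun w => _) = sin 1 \o* shrinking_indic n); last first.
  apply/funext => w /=; rewrite shrinking_indicE.
  by case: ifP => _; rewrite ?mul1r ?mul0r ?sin0.
rewrite expectationZl; last first.
  apply: (bounded_Lfun1 _ (M := 1)) => // w.
  by rewrite shrinking_indicE; case: ifP; rewrite ?normr1 ?normr0.
by rewrite expectation_indic ?unif01_itv_oc//; exact: measurable_itv.
Qed.

Lemma not_S3d_shrinking_indic : ~ S3d shrinking_indic (cst 0).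
Proof.
have sin1_gt0 : 0 < sin 1 :> R by rewrite sin2_gt0// ltr01 ltr1n.
move=> /(_ 1); apply: (not_summable_ge_harmonic sin1_gt0) => n.
apply: le_trans (chf_im_dist_le _ _ _).
rewrite chf_im_shrinking_indic chf_im_cst mulr0 sin0 subr0 ger0_norm//.
by rewrite mulr_ge0 ?harmonic_ge0 ?ltW.
Qed.

End unit_interval.

Theorem mainTheorem4 (R : realType) :
  (exists (d : measure_display) (T : measurableType d) (P : probability T R)
      (Xn : nat -> {RV P >-> R}) (X : {RV P >-> R}),
      S3d Xn X /\ ~ S2d Xn X) /\
  (exists (d : measure_display) (T : measurableType d) (P : probability T R)
      (Xn : nat -> {RV P >-> R}) (X : {RV P >-> R}),
      S2d Xn X /\ ~ S3d Xn X) /\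
  (forall alpha : R, 0 < alpha ->
    exists (d : measure_display) (T : measurableType d) (P : probability T R)
      (Xn : nat -> {RV P >-> R}) (X : {RV P >-> R}),
      S_as alpha Xn X /\ ~ S3d Xn X) /\
  (exists (d : measure_display) (T : measurableType d) (P : probability T R)
      (Xn : nat -> {RV P >-> R}) (X : {RV P >-> R}),
      complete_conv Xn X /\ ~ S3d Xn X).
Proof.
split; [|split; [|split]].
- exists _, _, (unif01 R),
    (fun n => shifted_neg_sqr (harmonic n ^+ 2) : {RV unif01 R >-> R}),
    (shifted_neg_sqr 0).
  split; [exact: S3d_shifted_neg_sqr | exact: not_S2d_shifted_neg_sqr].
- exists _, _, (unif01 R), (fun n => cst (- harmonic n)), (cst 0).
  split; [exact: S2d_neg_harmonic | exact: not_S3d_neg_harmonic].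
- move=> alpha alpha_gt0.
  exists _, _, (unif01 R), (@shrinking_indic R), (cst 0).
  split; [exact: S_as_shrinking_indic | exact: not_S3d_shrinking_indic].
- exists _, _, (unif01 R), (fun n => cst (- harmonic n)), (cst 0).
  split; [exact: complete_conv_neg_harmonic | exact: not_S3d_neg_harmonic].
Qed.
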